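(* Each of the ball relations $\mathbf{B}^{\infty}$ and $\mathbf{B}^{1}$ on $\mathfrak{S}\mathbb{Q}$ (with equivalence $\asymp_{\mathfrak{S}\mathbb{Q}}$) respects the equivalence and satisfies the five metric-space axioms, so that $\mathfrak{S}^\infty\mathbb{Q}$ and $\mathfrak{S}^1\mathbb{Q}$ are metric spaces. More generally, for any metric space $X$, the relation $\mathbf{B}^{\mathfrak{S}^\infty X}_\varepsilon f\,g := \mathsf{fold}_\star(\mathbf{B}^X_\varepsilon\circ f @ g)$ makes $\mathfrak{S}X$ a metric space $\mathfrak{S}^\infty X$.
   Context: Step functions. For a type $X$, $\mathfrak{S}X$ is the inductive type of (formal, rational) step functions on $[0,1]$: constructors $\mathsf{const}\ x$ ($x\in X$, written $\hat x$) and $\mathsf{glue}\ o\ f\ g$ ($o\in(0,1)\cap\mathbb{Q}$, $f,g\in\mathfrak{S}X$). Split. For $a\in(0,1)\cap\mathbb{Q}$: $\mathsf{SplitL}\ \hat x\ a := \hat x$, $\mathsf{SplitR}\ \hat x\ a:=\hat x$, and $\mathsf{SplitL}(\mathsf{glue}\ o\ f_l\ f_r)\ a :=$ $\mathsf{SplitL}\ f_l\ (a/o)$ if $a<o$; $f_l$ if $a=o$; $\mathsf{glue}\ (o/a)\ f_l\ (\mathsf{SplitL}\ f_r\ \tfrac{a-o}{1-o})$ if $a>o$. $\mathsf{SplitR}(\mathsf{glue}\ o\ f_l\ f_r)\ a :=$ $\mathsf{glue}\ \tfrac{o-a}{1-a}\ (\mathsf{SplitR}\ f_l\ (a/o))\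 f_r$ if $a<o$; $f_r$ if $a=o$; $\mathsf{SplitR}\ f_r\ \tfrac{a-o}{1-o}$ if $a>o$. Map and ap. $\mathsf{map}\ \varphi\ \hat x := \widehat{\varphi x}$, $\mathsf{map}\ \varphi\ (\mathsf{glue}\ o\ f\ g):=\mathsf{glue}\ o\ (\mathsf{map}\ \varphi\ f)(\mathsf{map}\ \varphi\ g)$; $\varphi\circ x:=\mathsf{map}\ \varphi\ x$. $\hat\varphi @ x := \mathsf{map}\ \varphi\ x$, $(\mathsf{glue}\ o\ F_l\ F_r) @ x := \mathsf{glue}\ o\ (F_l @ \mathsf{SplitL}\ x\ o)\ (F_r @ \mathsf{SplitR}\ x\ o)$. $f\{\circledast\}g := (\lambda u v. u\circledast v)\circ f @ g$. Fold. $\mathsf{fold}\ \varphi\ \psi\ \hat x:=\varphi x$, $\mathsf{fold}\ \varphi\ \psi\ (\mathsf{glue}\ o\ f\ g) := \psi\ o\ (\mathsf{fold}\ \varphi\ \psi\ f)(\mathsf{fold}\ \varphi\ \psi\ g)$. $\mathsf{fold}_\star := \mathsf{fold}\ \mathrm{id}\ (\lambda o\,p\,q.\ p\wedge q)$, $\mathsf{fold}_{\sup} := \mathsf{fold}\ \mathrm{id}\ (\lambda o\,x\,y.\max x\,y)$, $\mathsf{fold}_{\mathrm{affine}} := \mathsf{fold}\ \mathrm{id}\ (\lambda o\,x\,y.\ ox+(1-o)y)$. Equivalence. For a setoid $X$, $f\asymp_{\mathfrak{S}X} g := \mathsf{fold}_\star(f\{\asymp_X\}g)$. Norms and balls. $\|f\|_\infty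 := \mathsf{fold}_{\sup}(\mathsf{abs}\circ f)$, $\|f\|_1 := \mathsf{fold}_{\mathrm{affine}}(\mathsf{abs}\circ f)$; for $\varepsilon\in\mathbb{Q}^+$, $\mathbf{B}^\infty_\varepsilon f\,g := \|f\{-\}g\|_\infty\le\varepsilon$ and $\mathbf{B}^1_\varepsilon f\,g:=\|f\{-\}g\|_1\le\varepsilon$. Metric space. A metric space is a setoid $(X,\asymp)$ with a respectful relation $\mathbf{B}:\mathbb{Q}^+\Rightarrow X\Rightarrow X\Rightarrow\mathrm{Prop}$ such that for all $x,y,z$ and $\varepsilon,\varepsilon_1,\varepsilon_2\in\mathbb{Q}^+$: (1) $\mathbf{B}_\varepsilon x\,x$; (2) $\mathbf{B}_\varepsilon x\,y\Rightarrow\mathbf{B}_\varepsilon y\,x$; (3) $\mathbf{B}_{\varepsilon_1}x\,y\Rightarrow\mathbf{B}_{\varepsilon_2}y\,z\Rightarrow\mathbf{B}_{\varepsilon_1+\varepsilon_2}x\,z$; (4) $(\forall\delta.\ \varepsilon<\delta\Rightarrow\mathbf{B}_\delta x\,y)\Rightarrow\mathbf{B}_\varepsilon x\,y$; (5) $(\forall\varepsilon.\ \mathbf{B}_\varepsilon x\,y)\Rightarrow x\asymp y$. $\mathbb{Q}$ has $\mathbf{B}_\varepsilon x\,y := |x-y|\le\varepsilon$. *)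

From HB Require Import structures.
From mathcomp Require Import all_boot all_order all_algebra.
Set Implicit Arguments. Unset Strict Implicit. Unset Printing Implicit Defensive.
Import Order.TTheory GRing.Theory Num.Theory.
Local Open Scope ring_scope.

Definition ou_pred (q : rat) : bool := (0 < q) && (q < 1).
Definition OU := {q : rat | ou_pred q}.
Definition ouv (o : OU) : rat := proj1_sig o.

Lemma ou_half : ou_pred (1 / 2%:R).
Proof. by []. Qed.
Definition ou_half_pt : OU := exist ou_pred (1 / 2%:R) ou_half.

(* Smart constructor: q itself when 0 < q < 1 (the only case in which it is
   used below); otherwise an irrelevant default. *)
Definition mkOU (q : rat) : OU :=
  match @idP (ou_pred q) with
  | ReflectT H => exist ou_pred q H
  | ReflectF _ => ou_half_pt
  end.

(* Formal rational step functions on [0,1]. *)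
Inductive StepF (X : Type) : Type :=
| constStepF : X -> StepF X
| glue : OU -> StepF X -> StepF X -> StepF X.
Arguments constStepF {X} x.
Arguments glue {X} o f g.

Fixpoint SplitL {X : Type} (f : StepF X) (a : OU) : StepF X :=
  match f with
  | constStepF x => constStepF x
  | glue o fl fr =>
      let a' := ouv a in let o' := ouv o in
      if a' < o' then SplitL fl (mkOU (a' / o'))
      else if a' == o' then fl
      else glue (mkOU (o' / a')) fl (SplitL fr (mkOU ((a' - o') / (1 - o'))))
  end.

Fixpoint SplitR {X : Type} (f : StepF X) (a : OU) : StepF X :=
  match f with
  | constStepF x => constStepF x
  | glue o fl fr =>
      let a' := ouv a in let o' := ouv o in
      if a' < o' then glue (mkOU ((o' - a') / (1 - a'))) (SplitR fl (mkOU (a' / o'))) fr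
      else if a' == o' then fr
      else SplitR fr (mkOU ((a' - o') / (1 - o')))
  end.

Fixpoint Smap {X Y : Type} (phi : X -> Y) (f : StepF X) : StepF Y :=
  match f with
  | constStepF x => constStepF (phi x)
  | glue o f g => glue o (Smap phi f) (Smap phi g)
  end.

Fixpoint Sap {X Y : Type} (F : StepF (X -> Y)) (x : StepF X) : StepF Y :=
  match F with
  | constStepF phi => Smap phi x
  | glue o Fl Fr => glue o (Sap Fl (SplitL x o)) (Sap Fr (SplitR x o))
  end.

Definition Sbin {X Y Z : Type} (op : X -> Y -> Z) (f : StepF X) (g : StepF Y)
  : StepF Z := Sap (Smap (fun u v => op u v) f) g.

Fixpoint Sfold {X Y : Type} (phi : X -> Y) (psi : OU -> Y -> Y -> Y)
  (f : StepF X) : Y :=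
  match f with
  | constStepF x => phi x
  | glue o f g => psi o (Sfold phi psi f) (Sfold phi psi g)
  end.

Definition fold_star : StepF Prop -> Prop :=
  Sfold (fun p => p) (fun _ p q => p /\ q).
Definition fold_sup : StepF rat -> rat :=
  Sfold (fun x => x) (fun _ x y => Num.max x y).
Definition fold_affine : StepF rat -> rat :=
  Sfold (fun x => x) (fun o x y => ouv o * x + (1 - ouv o) * y).

Definition stepEq {X : Type} (eqv : X -> X -> Prop) (f g : StepF X) : Prop :=
  fold_star (Sbin eqv f g).

Definition normInf (f : StepF rat) : rat := fold_sup (Smap (fun x => `|x|) f).
Definition norm1 (f : StepF rat) : rat := fold_affine (Smap (fun x => `|x|) f).

Definition ballInf (e : rat) (f g : StepF rat) : Prop :=
  normInf (Sbin (fun u v => u - v) f g) <= e.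
Definition ball1 (e : rat) (f g : StepF rat) : Prop :=
  norm1 (Sbin (fun u v => u - v) f g) <= e.

Definition ballSInf {X : Type} (B : rat -> X -> X -> Prop) (e : rat)
  (f g : StepF X) : Prop :=
  fold_star (Sap (Smap (B e) f) g).

Record is_metric (X : Type) (eqv : X -> X -> Prop) (B : rat -> X -> X -> Prop)
  : Prop := {
  ms_refl : forall x, eqv x x;
  ms_sym : forall x y, eqv x y -> eqv y x;
  ms_trans : forall x y z, eqv x y -> eqv y z -> eqv x z;
  ms_resp : forall e x x' y y', 0 < e -> eqv x x' -> eqv y y' ->
              (B e x y <-> B e x' y');
  ms_ball_refl : forall e x, 0 < e -> B e x x;
  ms_ball_sym : forall e x y, 0 < e -> B e x y -> B e y x;
  ms_ball_triangle : forall e1 e2 x y z, 0 < e1 -> 0 < e2 ->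
              B e1 x y -> B e2 y z -> B (e1 + e2) x z;
  ms_ball_closed : forall e x y, 0 < e ->
              (forall d, e < d -> B d x y) -> B e x y;
  ms_ball_eq : forall x y, (forall e, 0 < e -> B e x y) -> eqv x y
}.
Arguments is_metric : clear implicits.

From HB Require Import structures.
From mathcomp Require Import all_boot all_order all_algebra.
From mathcomp Require Import ring lra.
Set Implicit Arguments. Unset Strict Implicit. Unset Printing Implicit Defensive.
Import Order.TTheory GRing.Theory Num.Theory.
Local Open Scope ring_scope.

(* Every formal step function [f : StepF X] denotes a function [eval f] on
   the half-open interval [0,1): a glued function [glue o f g] is [f] squeezed
   onto [0,o) followed by [g] squeezed onto [o,1).  The proof rests on the
   fact that every operation of the development is compatible with this
   denotation: [SplitL]/[SplitR] restrict to [0,a)/[a,1) (rescaled), [Smap]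
   and [Sap] act pointwise, [fold_star] and [fold_sup] are the universal
   quantifier and the supremum over [0,1).

   Consequently the equivalence [stepEq eqv] and the sup-ball [ballSInf B]
   are the pointwise liftings of [eqv] and [B], and every metric axiom lifts
   pointwise ([ballSInf_metric]).  The sup-norm ball [ballInf] on
   [StepF rat] is the sup-ball over the usual metric [qball] on [rat], hence
   a metric as well.  For the L1-ball, [fold_affine] is the integral of a
   step function; it is invariant under splitting, commutes with pointwise
   addition and subtraction, is monotone, and a nonnegative step function of
   zero integral vanishes; these give the axioms of [ball1]. *)

Lemma mkOU_val (q : rat) : ou_pred q -> ouv (mkOU q) = q.
Proof. by move=> hq; rewrite /mkOU; destruct idP. Qed.

Lemma ou_gt0 (o : OU) : 0 < ouv o.
Proof. by case: o => q /= /andP[]. Qed.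

Lemma ou_lt1 (o : OU) : ouv o < 1.
Proof. by case: o => q /= /andP[]. Qed.

Lemma ou_div (x y : rat) : 0 < x -> x < y -> ou_pred (x / y).
Proof.
move=> x0 xy; have y0 := lt_trans x0 xy.
by apply/andP; split; [rewrite divr_gt0 | rewrite ltr_pdivrMr // mul1r].
Qed.

Lemma ou_rescale (x y : rat) : y < x -> x < 1 -> ou_pred ((x - y) / (1 - y)).
Proof. by move=> yx x1; apply: ou_div; rewrite ?subr_gt0 // ltrD2r. Qed.

Definition in01 (t : rat) : bool := (0 <= t) && (t < 1).

(* For a breakpoint [o], the affine maps [s |-> o s] and [s |-> o + (1-o) s]
   send [0,1) onto [0,o) and [o,1) respectively; their inverses are
   [t |-> t / o] and [t |-> (t - o) / (1 - o)]. *)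

Lemma in01_left (o : OU) s : in01 s -> in01 (ouv o * s) && (ouv o * s < ouv o).
Proof.
have o0 := ou_gt0 o; have o1 := ou_lt1 o; case/andP=> s0 s1.
by rewrite /in01 -andbA; apply/and3P; split; nra.
Qed.

Lemma in01_right (o : OU) s :
  in01 s -> in01 (ouv o + (1 - ouv o) * s) && ~~ (ouv o + (1 - ouv o) * s < ouv o).
Proof.
have o0 := ou_gt0 o; have o1 := ou_lt1 o; case/andP=> s0 s1.
by rewrite /in01 -leNgt -andbA; apply/and3P; split; nra.
Qed.

Lemma in01_left_inv (o : OU) t : in01 t -> t < ouv o -> in01 (t / ouv o).
Proof.
have o0 := ou_gt0 o; case/andP=> t0 _ to; apply/andP.
by split; [rewrite divr_ge0 // ltW | rewrite ltr_pdivrMr // mul1r].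
Qed.

Lemma in01_right_inv (o : OU) t :
  in01 t -> ~~ (t < ouv o) -> in01 ((t - ouv o) / (1 - ouv o)).
Proof.
have o1 : 0 < 1 - ouv o by rewrite subr_gt0 ou_lt1.
case/andP=> _ t1; rewrite -leNgt => ot; apply/andP.
split; first by apply: divr_ge0; lra.
by rewrite ltr_pdivrMr // mul1r ltrD2r.
Qed.

Lemma split01 (o : OU) (P : rat -> Prop) :
  (forall t, in01 t -> P t) <->
  (forall s, in01 s -> P (ouv o * s)) /\
  (forall s, in01 s -> P (ouv o + (1 - ouv o) * s)).
Proof.
have o0 := ou_gt0 o; have o1 := ou_lt1 o.
split=> [H | [H1 H2] t ht].
  by split=> s /[dup] hs; [move/(in01_left o) | move/(in01_right o)];
     case/andP=> /H.
case: (boolP (t < ouv o)) => c.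
  have := H1 _ (in01_left_inv ht c).
  suff -> : ouv o * (t / ouv o) = t by [].
  by field; rewrite gt_eqF.
have := H2 _ (in01_right_inv ht c).
suff -> : ouv o + (1 - ouv o) * ((t - ouv o) / (1 - ouv o)) = t by [].
by field; rewrite subr_eq0 eq_sym lt_eqF.
Qed.

Fixpoint eval {X : Type} (f : StepF X) (t : rat) : X :=
  match f with
  | constStepF x => x
  | glue o f g => if t < ouv o then eval f (t / ouv o)
                  else eval g ((t - ouv o) / (1 - ouv o))
  end.

Lemma eval_glue_l X o (f g : StepF X) s :
  in01 s -> eval (glue o f g) (ouv o * s) = eval f s.
Proof.
case/(in01_left o)/andP=> _ /= ->; congr eval.
by field; rewrite gt_eqF ?ou_gt0.
Qed.

Lemma eval_glue_r X o (f g : StepF X) s :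
  in01 s -> eval (glue o f g) (ouv o + (1 - ouv o) * s) = eval g s.
Proof.
case/(in01_right o)/andP=> _ /= /negbTE ->; congr eval.
by field; rewrite subr_eq0 eq_sym lt_eqF ?ou_lt1.
Qed.

Lemma eval_SplitL X (f : StepF X) a t :
  in01 t -> eval (SplitL f a) t = eval f (ouv a * t).
Proof.
elim: f a t => [x|o fl IHl fr IHr] a t ht //=.
have o0 := ou_gt0 o; have o1 := ou_lt1 o; have a0 := ou_gt0 a; have a1 := ou_lt1 a.
have /andP[_ at_a] := in01_left a ht.
case: ltgtP => [ao|oa|a_eq_o].
- rewrite IHl // (lt_trans at_a ao) mkOU_val; last exact: ou_div.
  by congr eval; field; rewrite gt_eqF.
- rewrite /= mkOU_val; last exact: ou_div.
  have -> : (t < ouv o / ouv a) = (ouv a * t < ouv o).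
    by rewrite ltr_pdivlMr // mulrC.
  case: ifP => c.
    by congr eval; field; rewrite !gt_eqF //; lra.
  rewrite IHr; last first.
    rewrite -(mkOU_val (ou_div o0 oa)); apply: in01_right_inv => //.
    by rewrite mkOU_val ?ou_div // ltr_pdivlMr // mulrC c.
  rewrite mkOU_val; last exact: ou_rescale.
  by congr eval; field; rewrite !gt_eqF //; lra.
- by rewrite -a_eq_o at_a; congr eval; rewrite a_eq_o; field; rewrite gt_eqF.
Qed.

Lemma eval_SplitR X (f : StepF X) a t :
  in01 t -> eval (SplitR f a) t = eval f (ouv a + (1 - ouv a) * t).
Proof.
elim: f a t => [x|o fl IHl fr IHr] a t ht //=.
have o0 := ou_gt0 o; have o1 := ou_lt1 o; have a0 := ou_gt0 a; have a1 := ou_lt1 a.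
have /andP[_] := in01_right a ht; rewrite -leNgt => a_at.
case: ltgtP => [ao|oa|a_eq_o].
- have op := ou_rescale ao o1.
  rewrite /= mkOU_val //.
  have hc : (t < (ouv o - ouv a) / (1 - ouv a)) = (ouv a + (1 - ouv a) * t < ouv o).
    by rewrite ltr_pdivlMr ?subr_gt0 // mulrC ltrBrDl addrC.
  rewrite hc; case: ifP => c.
    rewrite IHl; last first.
      by rewrite -(mkOU_val op); apply: in01_left_inv; rewrite // mkOU_val // hc.
    rewrite mkOU_val; last exact: ou_div.
    by congr eval; field; rewrite !gt_eqF //; lra.
  have /andP[o'0 o'1] := op.
  by congr eval; field; rewrite !gt_eqF //; lra.
- rewrite IHr // mkOU_val; last exact: ou_rescale.
  have -> : (ouv a + (1 - ouv a) * t < ouv o) = false.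
    by apply/negbTE; rewrite -leNgt (le_trans (ltW oa)).
  by congr eval; field; rewrite !gt_eqF //; lra.
- rewrite -a_eq_o ltNge a_at /=; congr eval; rewrite a_eq_o.
  by field; rewrite gt_eqF //; lra.
Qed.

Lemma eval_Smap X Y (phi : X -> Y) f t : eval (Smap phi f) t = phi (eval f t).
Proof. by elim: f t => [x|o f IHf g IHg] t //=; case: ifP. Qed.

Lemma eval_Sap X Y (F : StepF (X -> Y)) x t :
  in01 t -> eval (Sap F x) t = eval F t (eval x t).
Proof.
elim: F x t => [phi|o Fl IHl Fr IHr] x t ht /=; first exact: eval_Smap.
have o0 := ou_gt0 o; have o1 := ou_lt1 o.
case: ifP => c.
  have ht' : in01 (t / ouv o) by exact: in01_left_inv.
  rewrite IHl // eval_SplitL //.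
  by congr (eval _ _ (eval x _)); field; rewrite gt_eqF.
have ht' : in01 ((t - ouv o) / (1 - ouv o)) by rewrite in01_right_inv ?c.
rewrite IHr // eval_SplitR //.
by congr (eval _ _ (eval x _)); field; rewrite gt_eqF //; lra.
Qed.

Lemma eval_Sbin X Y Z (op : X -> Y -> Z) f g t :
  in01 t -> eval (Sbin op f g) t = op (eval f t) (eval g t).
Proof. by move=> ht; rewrite /Sbin eval_Sap // eval_Smap. Qed.

Lemma fold_star_eval (f : StepF Prop) :
  fold_star f <-> (forall t, in01 t -> eval f t).
Proof.
elim: f => [p|o f IHf g IHg]; first by split=> [h t _|h]; [|exact: h 0 isT].
change (fold_star f /\ fold_star g <-> forall t, in01 t -> eval (glue o f g) t).
rewrite IHf IHg (split01 o (eval (glue o f g))).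
split=> -[H1 H2]; split=> s hs.
- by rewrite eval_glue_l //; apply: H1.
- by rewrite eval_glue_r //; apply: H2.
- by move: (H1 s hs); rewrite eval_glue_l.
- by move: (H2 s hs); rewrite eval_glue_r.
Qed.

Lemma fold_sup_le (f : StepF rat) e :
  fold_sup f <= e <-> (forall t, in01 t -> eval f t <= e).
Proof.
elim: f => [p|o f IHf g IHg]; first by split=> [h t _|h]; [|exact: h 0 isT].
change (Num.max (fold_sup f) (fold_sup g) <= e <->
        forall t, in01 t -> eval (glue o f g) t <= e).
rewrite ge_max (split01 o (fun t => eval (glue o f g) t <= e)).
split=> [/andP[/IHf H1 /IHg H2] | [H1 H2]].
  by split=> s hs; rewrite ?eval_glue_l ?eval_glue_r //; [apply: H1 | apply: H2].
apply/andP; split; [apply/IHf|apply/IHg] => s hs.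
- by move: (H1 s hs); rewrite eval_glue_l.
- by move: (H2 s hs); rewrite eval_glue_r.
Qed.

Lemma stepEq_eval X (eqv : X -> X -> Prop) f g :
  stepEq eqv f g <-> (forall t, in01 t -> eqv (eval f t) (eval g t)).
Proof.
rewrite /stepEq fold_star_eval.
by split=> H t ht; move: (H t ht); rewrite eval_Sbin.
Qed.

Lemma ballSInf_eval X (B : rat -> X -> X -> Prop) e f g :
  ballSInf B e f g <-> (forall t, in01 t -> B e (eval f t) (eval g t)).
Proof.
rewrite /ballSInf fold_star_eval.
by split=> H t ht; move: (H t ht); rewrite eval_Sap // eval_Smap.
Qed.

(* Every axiom of a metric space is a universally quantified statement about
   points, so it survives the passage to pointwise relations on [StepF X]. *)
Theorem ballSInf_metric X (eqv : X -> X -> Prop) (B : rat -> X -> X -> Prop) :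
  is_metric X eqv B -> is_metric (StepF X) (stepEq eqv) (ballSInf B).
Proof.
move=> HM; constructor.
- by move=> f; apply/stepEq_eval => t ht; exact: ms_refl HM _.
- move=> f g /stepEq_eval H; apply/stepEq_eval => t ht.
  exact: (ms_sym HM (H t ht)).
- move=> f g h /stepEq_eval H1 /stepEq_eval H2; apply/stepEq_eval => t ht.
  exact: (ms_trans HM (H1 t ht) (H2 t ht)).
- move=> e f f' g g' e0 /stepEq_eval Hf /stepEq_eval Hg; rewrite !ballSInf_eval.
  by split=> H t ht; apply/(ms_resp HM e0 (Hf t ht) (Hg t ht)); apply: H.
- by move=> e f e0; apply/ballSInf_eval => t ht; exact: (ms_ball_refl HM _ e0).
- move=> e f g e0 /ballSInf_eval H; apply/ballSInf_eval => t ht.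
  exact: (ms_ball_sym HM e0 (H t ht)).
- move=> e1 e2 f g h p1 p2 /ballSInf_eval H1 /ballSInf_eval H2.
  apply/ballSInf_eval => t ht.
  exact: (ms_ball_triangle HM p1 p2 (H1 t ht) (H2 t ht)).
- move=> e f g e0 H; apply/ballSInf_eval => t ht.
  by apply: (ms_ball_closed HM e0) => d /H /ballSInf_eval; apply.
- move=> f g H; apply/stepEq_eval => t ht.
  by apply: (ms_ball_eq HM) => e /H /ballSInf_eval; apply.
Qed.

Lemma is_metric_ext X (eqv : X -> X -> Prop) (B B' : rat -> X -> X -> Prop) :
  (forall e x y, B e x y <-> B' e x y) -> is_metric X eqv B -> is_metric X eqv B'.
Proof.
move=> BB' [r s t resp br bs bt bc be]; constructor=> //.
- by move=> e x x' y y' e0 hx hy; rewrite -!BB'; exact: resp.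
- by move=> e x e0; rewrite -BB'; exact: br.
- by move=> e x y e0; rewrite -!BB'; exact: bs.
- by move=> e1 e2 x y z p1 p2; rewrite -!BB'; exact: bt.
- by move=> e x y e0 H; rewrite -BB'; apply: bc => // d /H; rewrite BB'.
- by move=> x y H; apply: be => e /H; rewrite BB'.
Qed.

Lemma le_closed (x e : rat) : (forall d, e < d -> x <= d) -> x <= e.
Proof.
move=> H; rewrite leNgt; apply/negP => ex.
have [h1 h2] := midf_lt ex.
by move: (H _ h1); rewrite leNgt h2.
Qed.

Definition qball (e : rat) (x y : rat) : Prop := `|x - y| <= e.

Lemma qball_metric : is_metric rat (@eq rat) qball.
Proof.
rewrite /qball; constructor.
- by [].
- by [].
- exact: etrans.
- by move=> e x x' y y' _ -> ->.
- by move=> e x e0; rewrite subrr normr0 ltW.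
- by move=> e x y _; rewrite distrC.
- by move=> e1 e2 x y z _ _ H1 H2; rewrite (le_trans (ler_distD y _ _)) ?lerD.
- by move=> e x y _; apply: le_closed.
- move=> x y H; apply/eqP; rewrite -subr_eq0 -normr_le0.
  by apply: le_closed => e /H.
Qed.

Lemma ballInf_ballSInf e f g : ballInf e f g <-> ballSInf qball e f g.
Proof.
rewrite ballSInf_eval /ballInf /normInf fold_sup_le.
by split=> H t ht; move: (H t ht); rewrite eval_Smap eval_Sbin.
Qed.

Theorem ballInf_metric : is_metric (StepF rat) (stepEq (@eq rat)) ballInf.
Proof.
apply: is_metric_ext (ballSInf_metric qball_metric) => e f g.
by rewrite ballInf_ballSInf.
Qed.

Notation integral := fold_affine.

Lemma integral_glue o (f g : StepF rat) :
  integral (glue o f g) = ouv o * integral f + (1 - ouv o) * integral g.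
Proof. by []. Qed.

Lemma integral_split (f : StepF rat) a :
  integral f = ouv a * integral (SplitL f a) + (1 - ouv a) * integral (SplitR f a).
Proof.
elim: f a => [c|o fl IHl fr IHr] a /=; first by ring.
have o0 := ou_gt0 o; have o1 := ou_lt1 o; have a0 := ou_gt0 a; have a1 := ou_lt1 a.
case: ltgtP => [ao|oa|->]; rewrite /= ?integral_glue //.
- have p1 := ou_div a0 ao; have p2 := ou_rescale ao o1.
  rewrite (IHl (mkOU (ouv a / ouv o))) !mkOU_val //.
  by field; rewrite !gt_eqF //; lra.
- have p1 := ou_div o0 oa; have p2 := ou_rescale oa a1.
  rewrite (IHr (mkOU ((ouv a - ouv o) / (1 - ouv o)))) !mkOU_val //.
  by field; rewrite !gt_eqF //; lra.
Qed.

Definition convex_op (op : rat -> rat -> rat) : Prop :=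
  forall o x y x' y',
    op (o * x + (1 - o) * y) (o * x' + (1 - o) * y') = o * op x x' + (1 - o) * op y y'.

Lemma integral_Sbin op (f g : StepF rat) :
  convex_op op -> integral (Sbin op f g) = op (integral f) (integral g).
Proof.
move=> hop; elim: f g => [c|o f1 IH1 f2 IH2] g.
  change (integral (Smap (op c) g) = op c (integral g)).
  elim: g => [d|o g1 IHg1 g2 IHg2] //=; rewrite !integral_glue.
  have := hop (ouv o) c c (integral g1) (integral g2).
  have -> : ouv o * c + (1 - ouv o) * c = c by ring.
  by move=> ->; rewrite IHg1 IHg2.
change (integral (glue o (Sbin op f1 (SplitL g o)) (Sbin op f2 (SplitR g o)))
        = op (integral (glue o f1 f2)) (integral g)).
by rewrite !integral_glue IH1 IH2 (integral_split g o) hop.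
Qed.

Lemma convex_add : convex_op (fun u v => u + v).
Proof. by move=> *; ring. Qed.

Lemma convex_sub : convex_op (fun u v => u - v).
Proof. by move=> *; ring. Qed.

Lemma integral_ge0 (h : StepF rat) :
  (forall t, in01 t -> 0 <= eval h t) -> 0 <= integral h.
Proof.
elim: h => [c|o h1 IH1 h2 IH2] H; first exact: H 0 isT.
have [H1 H2] := (split01 o (fun t => 0 <= eval (glue o h1 h2) t)).1 H.
have o0 := ou_gt0 o; have o1 := ou_lt1 o.
have i1 : 0 <= integral h1.
  by apply: IH1 => s hs; move: (H1 s hs); rewrite eval_glue_l.
have i2 : 0 <= integral h2.
  by apply: IH2 => s hs; move: (H2 s hs); rewrite eval_glue_r.
rewrite integral_glue; nra.
Qed.

Lemma integral_mono (f g : StepF rat) :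
  (forall t, in01 t -> eval f t <= eval g t) -> integral f <= integral g.
Proof.
move=> H; rewrite -subr_ge0 -(integral_Sbin g f convex_sub).
by apply: integral_ge0 => t ht; rewrite eval_Sbin // subr_ge0 H.
Qed.

Lemma integral_eq0 (h : StepF rat) :
  (forall t, in01 t -> 0 <= eval h t) -> integral h <= 0 ->
  forall t, in01 t -> eval h t = 0.
Proof.
elim: h => [c|o h1 IH1 h2 IH2] H hle.
  by move=> t _; apply/le_anti; rewrite hle (H 0 isT).
have [H1 H2] := (split01 o (fun t => 0 <= eval (glue o h1 h2) t)).1 H.
have K1 : forall s, in01 s -> 0 <= eval h1 s.
  by move=> s hs; move: (H1 s hs); rewrite eval_glue_l.
have K2 : forall s, in01 s -> 0 <= eval h2 s.
  by move=> s hs; move: (H2 s hs); rewrite eval_glue_r.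
have i1 := integral_ge0 K1; have i2 := integral_ge0 K2.
have o0 := ou_gt0 o; have o1 := ou_lt1 o.
have L1 : integral h1 <= 0 by move: hle; rewrite integral_glue; nra.
have L2 : integral h2 <= 0 by move: hle; rewrite integral_glue; nra.
apply/(split01 o (fun t => eval (glue o h1 h2) t = 0)); split=> s hs.
  by rewrite eval_glue_l //; apply: IH1.
by rewrite eval_glue_r //; apply: IH2.
Qed.

Definition distS (f g : StepF rat) : StepF rat :=
  Smap (fun x => `|x|) (Sbin (fun u v => u - v) f g).

Lemma eval_distS f g t : in01 t -> eval (distS f g) t = `|eval f t - eval g t|.
Proof. by move=> ht; rewrite /distS eval_Smap eval_Sbin. Qed.

Lemma ball1_integral e f g : ball1 e f g <-> integral (distS f g) <= e.
Proof. by []. Qed.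

Lemma integral_distS_le f g f' g' :
  (forall t, in01 t -> `|eval f t - eval g t| <= `|eval f' t - eval g' t|) ->
  integral (distS f g) <= integral (distS f' g').
Proof. by move=> H; apply: integral_mono => t ht; rewrite !eval_distS // H. Qed.

(* The L1 metric: the setoid part is the pointwise one of [ballInf_metric];
   the ball axioms follow from monotonicity and additivity of the integral. *)
Theorem ball1_metric : is_metric (StepF rat) (stepEq (@eq rat)) ball1.
Proof.
constructor.
- exact: ms_refl ballInf_metric.
- exact: ms_sym ballInf_metric.
- exact: ms_trans ballInf_metric.
- move=> e f f' g g' _ /stepEq_eval Hf /stepEq_eval Hg; rewrite !ball1_integral.
  suff -> : integral (distS f g) = integral (distS f' g') by [].
  by apply/le_anti/andP; split; apply: integral_distS_le => t ht; rewrite Hf ?Hg.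
- move=> e f e0; rewrite ball1_integral; apply: le_trans (ltW e0).
  by rewrite -[0]/(integral (constStepF 0)); apply: integral_mono => t ht;
    rewrite eval_distS // subrr normr0.
- move=> e f g _; rewrite !ball1_integral; apply: le_trans.
  by apply: integral_distS_le => t ht; rewrite distrC.
- move=> e1 e2 f g h _ _; rewrite !ball1_integral => H1 H2.
  apply: le_trans (lerD H1 H2); rewrite -(integral_Sbin _ _ convex_add).
  apply: integral_mono => t ht.
  by rewrite eval_Sbin // !eval_distS // ler_distD.
- by move=> e f g _ H; rewrite ball1_integral; apply: le_closed.
- move=> f g H; apply/stepEq_eval => t ht.
  have h0 : integral (distS f g) <= 0 by apply: le_closed => e /H.
  have pos : forall s, in01 s -> 0 <= eval (distS f g) s.
    by move=> s hs; rewrite eval_distS.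
  have /eqP := integral_eq0 pos h0 ht.
  by rewrite eval_distS // normr_eq0 subr_eq0 => /eqP.
Qed.

Theorem mainTheorem11 :
  is_metric (StepF rat) (stepEq (@eq rat)) ballInf /\
  is_metric (StepF rat) (stepEq (@eq rat)) ball1 /\
  (forall (X : Type) (eqv : X -> X -> Prop) (B : rat -> X -> X -> Prop),
      is_metric X eqv B -> is_metric (StepF X) (stepEq eqv) (ballSInf B)).
Proof.
split; [exact: ballInf_metric | split; [exact: ball1_metric |]].
by move=> X eqv B; exact: ballSInf_metric.
Qed.
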